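(* Let $a>0$ and let $\epsilon>0$ be sufficiently small. For any solution $(x,v(x))$ of the regularized system $$\dot x=1,\qquad \epsilon\dot v=-a\epsilon v-\sin\!\left(\pi x\left[1+\tfrac12\psi(v)\right]\right)$$ there exists $x_T\ge0$ such that for all $x\ge x_T$ the solution is constrained in $V_0\cup V_-=\{(x,v):v<1\}$.
   Context: $\psi:\mathbb{R}\to\mathbb{R}$ is a transition function: $C^1$ on $\mathbb{R}$ and $C^2$ on $[-1,1]$, with $\psi(v)=\operatorname{sign}(v)$ for $|v|\ge1$, $\psi'(v)>0$ for $|v|<1$, and $\operatorname{sign}\psi''(v)=-\operatorname{sign}(v)$ at $|v|=1$. $V_0=\{|v|<1\}$ is the switching layer, $V_\pm=\{\pm v\ge1\}$ (note $V_-=\{v\le-1\}$). *)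

From Stdlib Require Import Reals Lra.
From Coquelicot Require Import Coquelicot.
Open Scope R_scope.

Definition has_deriv_within (f f' : R -> R) (lo hi : R) : Prop :=
  forall x, lo <= x <= hi ->
  forall eps, 0 < eps -> exists delta, 0 < delta /\
    forall y, lo <= y <= hi -> y <> x -> Rabs (y - x) < delta ->
      Rabs ((f y - f x) / (y - x) - f' x) < eps.

Definition continuous_within (g : R -> R) (lo hi : R) : Prop :=
  forall x, lo <= x <= hi ->
  forall eps, 0 < eps -> exists delta, 0 < delta /\
    forall y, lo <= y <= hi -> Rabs (y - x) < delta -> Rabs (g y - g x) < eps.

(* Transition function: C^1 on R, C^2 on [-1,1] (with second derivative psi2),
   psi = sign outside (-1,1), psi' > 0 on (-1,1), and
   sign psi''(v) = - sign v at |v| = 1, i.e. psi''(1) < 0 and psi''(-1) > 0. *)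
Definition transition_function (psi : R -> R) : Prop :=
  (forall v, ex_derive psi v) /\
  (forall v, continuous (Derive psi) v) /\
  (exists psi2 : R -> R,
     has_deriv_within (Derive psi) psi2 (-1) 1 /\
     continuous_within psi2 (-1) 1 /\
     psi2 1 < 0 /\ 0 < psi2 (-1)) /\
  (forall v, 1 <= v -> psi v = 1) /\
  (forall v, v <= -1 -> psi v = -1) /\
  (forall v, -1 < v < 1 -> 0 < Derive psi v).

Definition V0 (v : R) : Prop := Rabs v < 1.
Definition Vminus (v : R) : Prop := v <= -1.

(* (x, v(x)) is a solution of  x' = 1, eps v' = - a eps v - sin(pi x [1 + psi(v)/2]),
   parametrised by x (since x' = 1). *)
Definition is_solution (psi : R -> R) (a eps : R) (v : R -> R) : Prop :=
  exists dv : R -> R, forall x,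
    is_derive v x (dv x) /\
    eps * dv x = - a * eps * v x - sin (PI * x * (1 + / 2 * psi (v x))).

From Stdlib Require Import Reals Lra Lia Classical.
From Coquelicot Require Import Coquelicot.
Open Scope R_scope.

(* Write phase x = x (1 + psi (v x) / 2), so that eps v' = - a eps v - sin (PI phase) and
   phase x = 3x/2 exactly when v x >= 1.

   If at some large x with sin (PI (3x/2 - d/2)) >= s the phase lags, phase x <= 3x/2 - d/2,
   it never catches up: at a first return to such a level sin (PI phase) >= s gives
   eps v' <= - s/2, and since psi' >= c0 (1 - psi) there, the phase is decreasing once eps
   is small. Hence phase < 3x/2, i.e. v < 1, from then on.

   Otherwise the phase never lags at those points. Then v falls by more than 2 just before
   each point x_k with 3 x_k / 2 = 2k + 3 - 3d/2, so v (x_k) > 1. Where v >= 1 the equation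
   is linear and exp (a x) (v - 1) + G x / eps + exp (a x) is conserved, G being a primitive
   of exp (a x) sin (3 PI x / 2). Since G nearly peaks at the x_k, this forces v >= 1 on
   every period [x_k, x_(k+1)] and makes exp (a x) (v - 1) drop by a fixed amount over each
   of them, which contradicts v (x_k) > 1. *)

Lemma is_derive_continuity_pt f x l : is_derive f x l -> continuity_pt f x.
Proof.
  intro Hf. apply continuity_pt_filterlim, (ex_derive_continuous (V := R_NormedModule)).
  now exists l.
Qed.

Lemma continuity_pt_le_of_close f c l : continuity_pt f c ->
  (forall d, 0 < d -> exists y, Rabs (y - c) < d /\ f y <= l) -> f c <= l.
Proof.
  intros Hc Hclose. apply Rnot_lt_le; intro Hlt.
  destruct (Hc (f c - l)) as [d [Hd Hnear]]; [lra|].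
  destruct (Hclose d Hd) as [y [Hy Hfy]].
  destruct (Req_dec y c) as [->|Hne]; [lra|].
  assert (Hdist : Rabs (f y - f c) < f c - l).
  { apply Hnear. split; [split; [exact I | auto] | exact Hy]. }
  apply Rabs_def2 in Hdist. lra.
Qed.

Lemma continuity_pt_ge_of_close f c l : continuity_pt f c ->
  (forall d, 0 < d -> exists y, Rabs (y - c) < d /\ l <= f y) -> l <= f c.
Proof.
  intros Hc Hclose.
  enough (- f c <= - l) by lra.
  apply (continuity_pt_le_of_close (fun x => - f x)); [now apply continuity_pt_opp|].
  intros d Hd. destruct (Hclose d Hd) as [y [Hy Hfy]].
  exists y. split; [exact Hy | lra].
Qed.

Lemma last_zero_before_positive f a b : a < b ->
  (forall x, a <= x <= b -> continuity_pt f x) -> f a <= 0 -> 0 < f b ->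
  exists c, a <= c < b /\ f c = 0 /\ forall x, c < x <= b -> 0 < f x.
Proof.
  intros Hab Hf Ha Hb.
  set (E x := a <= x <= b /\ f x <= 0).
  destruct (completeness E) as [c [Hub Hlub]].
  { exists b. intros x [Hx _]. lra. }
  { exists a. split; [lra | exact Ha]. }
  assert (Hac : a <= c) by (apply Hub; split; [lra | exact Ha]).
  assert (Hcb : c <= b) by (apply Hlub; intros x [Hx _]; lra).
  assert (Hpos : forall x, c < x <= b -> 0 < f x).
  { intros x Hx. apply Rnot_le_lt; intro Hfx.
    assert (x <= c) by (apply Hub; split; [lra | exact Hfx]). lra. }
  assert (Hle : f c <= 0).
  { apply continuity_pt_le_of_close; [apply Hf; lra|].
    intros d Hd. apply NNPP; intro Hfar.
    enough (c <= c - d) by lra.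
    apply Hlub. intros x Ex. apply Rnot_lt_le; intro Hx.
    assert (x <= c) by now apply Hub.
    apply Hfar. exists x. split; [apply Rabs_def1; lra | exact (proj2 Ex)]. }
  assert (Hcb' : c < b) by (destruct (Req_dec c b) as [->|]; lra).
  assert (Hge : 0 <= f c).
  { apply continuity_pt_ge_of_close; [apply Hf; lra|].
    intros d Hd. set (y := Rmin (c + d / 2) b).
    assert (Hy : c < y <= c + d / 2 /\ y <= b) by (unfold y, Rmin; destruct Rle_dec; lra).
    exists y. split; [apply Rabs_def1; lra | apply Rlt_le, Hpos; lra]. }
  exists c. repeat split; try lra. exact Hpos.
Qed.

Lemma is_derive_nonneg_of_right_gt g c l b : is_derive g c l -> c < b ->
  (forall y, c < y <= b -> g c < g y) -> 0 <= l.
Proof.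
  intros Hd Hcb Hgt. apply Rnot_lt_le; intro Hl.
  apply is_derive_Reals in Hd.
  destruct (Hd (- l / 2)) as [d Hquot]; [lra|].
  set (h := Rmin (d / 2) (b - c)).
  assert (Hh : 0 < h <= b - c /\ h < d)
    by (pose proof (cond_pos d); unfold h, Rmin; destruct Rle_dec; lra).
  specialize (Hquot h ltac:(lra) ltac:(rewrite Rabs_pos_eq; lra)).
  apply Rabs_def2 in Hquot.
  assert (g c < g (c + h)) by (apply Hgt; lra).
  assert (0 < (g (c + h) - g c) / h) by (apply Rdiv_lt_0_compat; lra).
  lra.
Qed.

Lemma nondecreasing_of_derive_nonneg f df u w : u <= w ->
  (forall x, u < x < w -> is_derive f x (df x)) -> (forall x, u < x < w -> 0 <= df x) ->
  (forall x, u <= x <= w -> continuity_pt f x) -> f u <= f w.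
Proof.
  intros Huw Hd Hsign Hc.
  (* Only interior derivatives are known, so feed MVT the clipped derivative. *)
  destruct (MVT_gen f u w (fun x => Rmax 0 (df x))) as [x [_ Heq]];
    rewrite ?Rmin_left, ?Rmax_right by lra.
  - intros x Hx. rewrite Rmax_right by now apply Hsign. now apply Hd.
  - exact Hc.
  - assert (0 <= Rmax 0 (df x) * (w - u)) by (apply Rmult_le_pos; [apply Rmax_l | lra]).
    lra.
Qed.

Lemma nonincreasing_of_derive_nonpos f df u w : u <= w ->
  (forall x, u < x < w -> is_derive f x (df x)) -> (forall x, u < x < w -> df x <= 0) ->
  (forall x, u <= x <= w -> continuity_pt f x) -> f w <= f u.
Proof.
  intros Huw Hd Hsign Hc.
  enough (- f u <= - f w) by lra.
  apply (nondecreasing_of_derive_nonneg (fun x => - f x) (fun x => - df x)); [exact Huw | | |].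
  - intros x Hx. exact (is_derive_opp f x (df x) (Hd x Hx)).
  - intros x Hx. specialize (Hsign x Hx). lra.
  - intros x Hx. now apply continuity_pt_opp, Hc.
Qed.

Lemma has_deriv_within_is_derive f f' lo hi x :
  has_deriv_within f f' lo hi -> lo < x < hi -> is_derive f x (f' x).
Proof.
  intros Hf Hx. apply is_derive_Reals. intros e He.
  destruct (Hf x ltac:(lra) e He) as [d [Hd Hquot]].
  assert (Hr : 0 < Rmin d (Rmin (x - lo) (hi - x))) by (repeat apply Rmin_pos; lra).
  exists (mkposreal _ Hr). intros h Hh Hlt. simpl in Hlt.
  apply Rmin_Rgt_l in Hlt as [Hld Hlt]. apply Rmin_Rgt_l in Hlt as [Hlo Hhi].
  apply Rabs_def2 in Hlo. apply Rabs_def2 in Hhi.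
  specialize (Hquot (x + h) ltac:(lra) ltac:(lra)).
  replace (x + h - x) with h in Hquot by ring. now apply Hquot.
Qed.

Lemma exp_le_exp x y : x <= y -> exp x <= exp y.
Proof.
  intro Hxy. destruct (Rle_lt_or_eq_dec x y Hxy) as [Hlt | ->];
    [apply Rlt_le, exp_increasing, Hlt | apply Rle_refl].
Qed.

Lemma sin_PI_add_even (k : nat) t : sin (PI * (t + 2 * INR k)) = sin (PI * t).
Proof. rewrite <- (sin_period (PI * t) k). f_equal. ring. Qed.

Lemma cos_PI_add_even (k : nat) t : cos (PI * (t + 2 * INR k)) = cos (PI * t).
Proof. rewrite <- (cos_period (PI * t) k). f_equal. ring. Qed.

Lemma sin_PI_ge_on_half_period (k : nat) d t : 0 < d <= 1/2 ->
  2 * INR k + d <= t <= 2 * INR k + 1 - d -> sin (PI * d) <= sin (PI * t).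
Proof.
  intros Hd Ht. pose proof PI_RGT_0.
  replace t with ((t - 2 * INR k) + 2 * INR k) by ring. rewrite sin_PI_add_even.
  destruct (Rle_lt_dec (t - 2 * INR k) (1/2)).
  - apply sin_incr_1; nra.
  - rewrite <- (sin_PI_x (PI * (t - 2 * INR k))).
    apply sin_incr_1; nra.
Qed.

Lemma exists_cos_PI_ge c : c < 1 -> exists d, 0 < d <= 1/3 /\ c <= cos (PI * (3/2 * d)).
Proof.
  intro Hc. pose proof PI_RGT_0.
  destruct (continuity_cos 0 (1 - c)) as [r [Hr Hnear]]; [lra|].
  set (d := Rmin (1/3) (r / (2 * PI))).
  assert (Hd : 0 < d <= 1/3 /\ PI * (3/2 * d) < r).
  { assert (0 < r / (2 * PI)) by (apply Rdiv_lt_0_compat; lra).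
    assert (d <= r / (2 * PI)) by apply Rmin_r.
    assert (PI * (3/2 * d) <= PI * (3/2 * (r / (2 * PI)))) by (apply Rmult_le_compat_l; lra).
    replace (PI * (3/2 * (r / (2 * PI)))) with (3/4 * r) in * by (field; lra).
    unfold d, Rmin in *; destruct Rle_dec; lra. }
  exists d. split; [lra|].
  destruct (Req_dec (PI * (3/2 * d)) 0) as [Hz|Hnz]; [nra|].
  assert (Hdist : Rabs (cos (PI * (3/2 * d)) - cos 0) < 1 - c).
  { apply Hnear. split; [split; [exact I | auto] |].
    simpl. unfold R_dist. rewrite Rminus_0_r, Rabs_pos_eq; nra. }
  rewrite cos_0 in Hdist. apply Rabs_def2 in Hdist. lra.
Qed.

Definition freq := 3 * PI / 2.

Lemma freq_pos : 0 < freq.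
Proof. unfold freq. pose proof PI_RGT_0. lra. Qed.

Section Forcing.
Variable a : R.
Hypothesis Ha : 0 < a.

Definition G s := exp (a * s) * (a * sin (freq * s) - freq * cos (freq * s)) / (a ^ 2 + freq ^ 2).

Let den_pos : 0 < a ^ 2 + freq ^ 2.
Proof. pose proof freq_pos. nra. Qed.

Lemma G_is_derive s : is_derive G s (exp (a * s) * sin (freq * s)).
Proof. unfold G. auto_derive; [exact I|]. field. lra. Qed.

Lemma G_continuity_pt s : continuity_pt G s.
Proof. exact (is_derive_continuity_pt _ _ _ (G_is_derive s)). Qed.

Lemma G_sub_period s : G (s - 4/3) = exp (- (a * (4/3))) * G s.
Proof.
  unfold G.
  replace (freq * (s - 4/3)) with (freq * s + - (2 * PI)) by (unfold freq; field).
  rewrite sin_plus, cos_plus, cos_neg, sin_neg, sin_2PI, cos_2PI.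
  replace (a * (s - 4/3)) with (a * s + - (a * (4/3))) by ring. rewrite exp_plus.
  field. lra.
Qed.

Lemma freq_mul_at (k : nat) e x : 3/2 * x = 2 * INR k + 1 - e ->
  freq * x = PI * ((1 - e) + 2 * INR k).
Proof. intro Hx. unfold freq. replace (3 * PI / 2 * x) with (PI * (3/2 * x)) by field. rewrite Hx. ring. Qed.

Lemma G_at (k : nat) e x : 3/2 * x = 2 * INR k + 1 - e ->
  G x = exp (a * x) * (a * sin (PI * e) + freq * cos (PI * e)) / (a ^ 2 + freq ^ 2).
Proof.
  intro Hx. unfold G. rewrite (freq_mul_at k e x Hx), sin_PI_add_even, cos_PI_add_even.
  replace (PI * (1 - e)) with (PI - PI * e) by ring.
  rewrite sin_PI_x, Rtrigo_facts.cos_pi_minus. field. lra.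
Qed.

Lemma sin_freq_eq (k : nat) s : sin (freq * s) = sin (PI * (3/2 * s - 2 * INR k)).
Proof.
  rewrite <- (sin_PI_add_even k). f_equal. unfold freq. field.
Qed.

Lemma G_rise_le_peak (k : nat) e x : 0 <= e <= 1/2 -> exp (- a) <= cos (PI * e) ->
  3/2 * x = 2 * INR (S k) + 1 - e -> G (x - 2/3 * (2 - e)) <= G x.
Proof.
  intros He Hcos Hx. pose proof PI_RGT_0. pose proof freq_pos.
  rewrite (G_at k 0) by (rewrite S_INR in Hx; lra).
  rewrite (G_at (S k) e x Hx), Rmult_0_r, sin_0, cos_0.
  assert (exp (a * (x - 2/3 * (2 - e))) <= exp (a * x) * exp (- a))
    by (rewrite <- exp_plus; apply exp_le_exp; nra).
  assert (exp (a * x) * exp (- a) <= exp (a * x) * cos (PI * e))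
    by (apply Rmult_le_compat_l; [apply Rlt_le, exp_pos | exact Hcos]).
  assert (0 <= exp (a * x) * (a * sin (PI * e)))
    by (apply Rmult_le_pos; [apply Rlt_le, exp_pos | apply Rmult_le_pos; [lra | apply sin_ge_0; nra]]).
  unfold Rdiv. apply Rmult_le_compat_r; [apply Rlt_le, Rinv_0_lt_compat; lra|].
  nra.
Qed.

(* Over the period ending at x, G rises to G_rise_le_peak's point, falls, and rises again. *)
Lemma G_le_at_peak (k : nat) e x : 0 <= e <= 1/2 -> exp (- a) <= cos (PI * e) ->
  3/2 * x = 2 * INR (S k) + 1 - e -> forall s, x - 4/3 <= s <= x -> G s <= G x.
Proof.
  intros He Hcos Hx s Hs. pose proof PI_RGT_0.
  set (top := x - 2/3 * (2 - e)). set (bot := x - 2/3 * (1 - e)).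
  assert (Htop : G top <= G x) by exact (G_rise_le_peak k e x He Hcos Hx).
  rewrite S_INR in Hx.
  assert (Hrise : forall u w, u <= w -> (forall y, u < y < w -> 0 <= sin (freq * y)) -> G u <= G w).
  { intros u w Huw Hsin.
    apply (nondecreasing_of_derive_nonneg G (fun y => exp (a * y) * sin (freq * y))); [exact Huw | | |].
    - intros; apply G_is_derive.
    - intros y Hy. apply Rmult_le_pos; [apply Rlt_le, exp_pos | now apply Hsin].
    - intros; apply G_continuity_pt. }
  destruct (Rle_lt_dec s top).
  - enough (G s <= G top) by lra.
    apply Hrise; [lra|]. intros y Hy. rewrite (sin_freq_eq k).
    apply sin_ge_0; unfold top in *; nra.
  - destruct (Rle_lt_dec s bot).
    + enough (G s <= G top) by lra.
      apply (nonincreasing_of_derive_nonpos G (fun y => exp (a * y) * sin (freq * y))); [lra | | |].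
      * intros; apply G_is_derive.
      * intros y Hy. rewrite (sin_freq_eq k).
        assert (sin (PI * (3/2 * y - 2 * INR k)) <= 0) by (apply sin_le_0; unfold top, bot in *; nra).
        assert (0 < exp (a * y)) by apply exp_pos. nra.
      * intros; apply G_continuity_pt.
    + apply Hrise; [lra|]. intros y Hy. rewrite (sin_freq_eq (S k)), S_INR.
      apply sin_ge_0; unfold bot in *; nra.
Qed.

Definition period_gain e := (1 - exp (- (a * (4/3)))) * (freq * cos (PI * e)) / (a ^ 2 + freq ^ 2).

Lemma period_gain_pos e : 0 < cos (PI * e) -> 0 < period_gain e.
Proof.
  intro Hcos. pose proof freq_pos. unfold period_gain.
  assert (exp (- (a * (4/3))) < 1) by (rewrite <- exp_0; apply exp_increasing; lra).
  apply Rdiv_lt_0_compat; [apply Rmult_lt_0_compat; [lra | now apply Rmult_lt_0_compat] | exact den_pos].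
Qed.

Lemma G_gain_over_period (k : nat) e x : 0 <= e <= 1/2 -> 0 <= x ->
  3/2 * x = 2 * INR k + 1 - e -> period_gain e <= G x - G (x - 4/3).
Proof.
  intros He Hx Hxk. pose proof PI_RGT_0. pose proof freq_pos.
  unfold period_gain. rewrite G_sub_period, (G_at k e x Hxk).
  set (E := exp (- (a * (4/3)))). set (A := a * sin (PI * e) + freq * cos (PI * e)).
  assert (E < 1) by (unfold E; rewrite <- exp_0; apply exp_increasing; lra).
  assert (1 <= exp (a * x)) by (rewrite <- exp_0; apply exp_le_exp; nra).
  assert (0 <= a * sin (PI * e)) by (apply Rmult_le_pos; [lra | apply sin_ge_0; nra]).
  assert (0 <= freq * cos (PI * e)) by (apply Rmult_le_pos; [lra | apply cos_ge_0; nra]).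
  replace (exp (a * x) * A / (a ^ 2 + freq ^ 2) - E * (exp (a * x) * A / (a ^ 2 + freq ^ 2)))
    with ((1 - E) * (exp (a * x) * A) / (a ^ 2 + freq ^ 2)) by (field; lra).
  unfold Rdiv. apply Rmult_le_compat_r; [apply Rlt_le, Rinv_0_lt_compat; lra|].
  apply Rmult_le_compat_l; [lra|].
  assert (0 <= A) by (unfold A; lra).
  apply Rle_trans with A; [unfold A; lra|].
  rewrite <- (Rmult_1_l A) at 1. apply Rmult_le_compat_r; lra.
Qed.

End Forcing.

Section Transition.
Variable psi : R -> R.
Hypothesis Hpsi : transition_function psi.

Lemma psi_is_derive w : is_derive psi w (Derive psi w).
Proof. apply Derive_correct, Hpsi. Qed.

Lemma psi_continuity_pt w : continuity_pt psi w.
Proof. exact (is_derive_continuity_pt _ _ _ (psi_is_derive w)). Qed.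

Lemma Derive_psi_continuity_pt w : continuity_pt (Derive psi) w.
Proof. apply continuity_pt_filterlim, Hpsi. Qed.

Lemma psi_eq_1 w : 1 <= w -> psi w = 1.
Proof. destruct Hpsi as (_ & _ & _ & H & _). apply H. Qed.

Lemma psi_eq_m1 w : w <= -1 -> psi w = -1.
Proof. destruct Hpsi as (_ & _ & _ & _ & H & _). apply H. Qed.

Lemma Derive_psi_pos w : -1 < w < 1 -> 0 < Derive psi w.
Proof. destruct Hpsi as (_ & _ & _ & _ & _ & H). apply H. Qed.

Lemma psi_nondecreasing u w : -1 <= u <= w -> w <= 1 -> psi u <= psi w.
Proof.
  intros Hu Hw.
  apply (nondecreasing_of_derive_nonneg psi (Derive psi)); [lra | | |].
  - intros x _. apply psi_is_derive.
  - intros x Hx. apply Rlt_le, Derive_psi_pos. lra.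
  - intros x _. apply psi_continuity_pt.
Qed.

Lemma psi_le_1 w : psi w <= 1.
Proof.
  destruct (Rle_lt_dec 1 w); [rewrite psi_eq_1; lra|].
  destruct (Rle_lt_dec w (-1)); [rewrite psi_eq_m1; lra|].
  rewrite <- (psi_eq_1 1) by lra. apply psi_nondecreasing; lra.
Qed.

Lemma psi_has_zero : exists z, -1 < z < 1 /\ psi z = 0.
Proof.
  destruct (Ranalysis5.IVT_interv psi (-1) 1) as [z [Hz Hpz]].
  - intros; apply psi_continuity_pt.
  - lra.
  - rewrite psi_eq_m1; lra.
  - rewrite psi_eq_1; lra.
  - exists z. split; [|exact Hpz].
    split; apply Rnot_le_lt; intro; [rewrite psi_eq_m1 in Hpz | rewrite psi_eq_1 in Hpz]; lra.
Qed.

Lemma Derive_psi_nonincreasing_near_1 : exists r, 0 < r <= 1/2 /\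
  forall u w, 1 - r <= u <= w -> w <= 1 -> Derive psi w <= Derive psi u.
Proof.
  destruct Hpsi as (_ & _ & (psi2 & Hd2 & Hc2 & Hneg1 & _) & _).
  destruct (Hc2 1 ltac:(lra) (- psi2 1 / 2)) as [d [Hd Hnear]]; [lra|].
  set (r := Rmin (d / 2) (1/2)).
  assert (Hr : 0 < r <= 1/2 /\ r < d) by (unfold r, Rmin; destruct Rle_dec; lra).
  exists r. split; [lra|]. intros u w Hu Hw.
  apply (nonincreasing_of_derive_nonpos (Derive psi) psi2); [lra | | |].
  - intros x Hx. apply (has_deriv_within_is_derive _ _ _ _ _ Hd2). lra.
  - intros x Hx. assert (Hx1 : Rabs (x - 1) < d) by (apply Rabs_def1; lra).
    specialize (Hnear x ltac:(lra) Hx1). apply Rabs_def2 in Hnear. lra.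
  - intros x _. apply Derive_psi_continuity_pt.
Qed.

Lemma psi_gap_le_Derive_near_1 : exists r, 0 < r <= 1/2 /\
  forall w, 1 - r <= w < 1 -> 1 - psi w <= Derive psi w.
Proof.
  destruct Derive_psi_nonincreasing_near_1 as [r [Hr Hdecr]].
  exists r. split; [exact Hr|]. intros w Hw.
  destruct (MVT_gen psi w 1 (Derive psi)) as [c [Hc Heq]];
    rewrite ?Rmin_left, ?Rmax_right in * by lra.
  - intros; apply psi_is_derive.
  - intros; apply psi_continuity_pt.
  - rewrite psi_eq_1 in Heq by lra.
    assert (Derive psi c <= Derive psi w) by (apply Hdecr; lra).
    assert (0 < Derive psi w) by (apply Derive_psi_pos; lra).
    nra.
Qed.

(* The transversality psi''(1) < 0 makes psi' comparable to the gap 1 - psi near v = 1. *)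
Lemma Derive_psi_ge_gap : exists c0, 0 < c0 /\
  forall w, w < 1 -> 1/2 <= psi w -> c0 * (1 - psi w) <= Derive psi w.
Proof.
  destruct psi_gap_le_Derive_near_1 as [r [Hr Hgap]].
  destruct psi_has_zero as [z [Hz Hpz]].
  set (lo := Rmin z (1 - r)).
  assert (Hlo : -1 < lo <= 1 - r) by (unfold lo, Rmin; destruct Rle_dec; lra).
  destruct (continuity_ab_min (Derive psi) lo (1 - r)) as [m [Hmin Hm]]; [lra | |].
  { intros; apply Derive_psi_continuity_pt. }
  assert (Hmpos : 0 < Derive psi m) by (apply Derive_psi_pos; lra).
  set (c0 := Rmin (Derive psi m) 1).
  assert (Hc0 : 0 < c0 <= 1 /\ c0 <= Derive psi m) by (unfold c0, Rmin; destruct Rle_dec; lra).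
  exists c0. split; [lra|]. intros w Hw Hhalf.
  assert (Hw1 : -1 < w) by (apply Rnot_le_lt; intro; rewrite psi_eq_m1 in Hhalf; lra).
  pose proof (psi_le_1 w).
  destruct (Rle_lt_dec (1 - r) w).
  - assert (1 - psi w <= Derive psi w) by (apply Hgap; lra).
    nra.
  - assert (Hzw : z <= w).
    { apply Rnot_lt_le; intro. assert (psi w <= psi z) by (apply psi_nondecreasing; lra). lra. }
    assert (Derive psi m <= Derive psi w) by (apply Hmin; unfold lo, Rmin in *; destruct Rle_dec; lra).
    nra.
Qed.

Section Solution.
Variables (a eps : R) (v dv : R -> R).
Hypothesis Ha : 0 < a.
Hypothesis Heps : 0 < eps.
Hypothesis v_is_derive : forall x, is_derive v x (dv x).
Hypothesis v_ode : forall x, eps * dv x = - a * eps * v x - sin (PI * x * (1 + / 2 * psi (v x))).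

Lemma v_continuity_pt x : continuity_pt v x.
Proof. exact (is_derive_continuity_pt _ _ _ (v_is_derive x)). Qed.

Definition phase x := x * (1 + / 2 * psi (v x)).
Definition dphase x := 1 + / 2 * psi (v x) + x * (/ 2 * (dv x * Derive psi (v x))).

Lemma phase_is_derive x : is_derive phase x (dphase x).
Proof.
  unfold phase, dphase. auto_derive.
  - split; [exists (Derive psi (v x)); apply psi_is_derive|].
    split; [exists (dv x); apply v_is_derive | exact I].
  - replace (Derive (fun y => v y) x) with (dv x) by (symmetry; apply is_derive_unique, v_is_derive).
    rewrite !Rmult_1_l. reflexivity.
Qed.

Lemma phase_continuity_pt x : continuity_pt phase x.
Proof. exact (is_derive_continuity_pt _ _ _ (phase_is_derive x)). Qed.

Lemma eps_dv_phase x : eps * dv x = - a * eps * v x - sin (PI * phase x).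
Proof. unfold phase. rewrite <- Rmult_assoc. apply v_ode. Qed.

Lemma phase_le x : 0 <= x -> phase x <= 3/2 * x.
Proof. intro Hx. unfold phase. pose proof (psi_le_1 (v x)). nra. Qed.

Lemma v_lt_1_of_phase_lt x : phase x < 3/2 * x -> v x < 1.
Proof.
  intro Hlt. apply Rnot_le_lt; intro Hv.
  unfold phase in Hlt. rewrite psi_eq_1 in Hlt by exact Hv. lra.
Qed.

Lemma v_gt_m1_of_phase_gt x : x / 2 < phase x -> -1 < v x.
Proof.
  intro Hgt. apply Rnot_le_lt; intro Hv.
  unfold phase in Hgt. rewrite psi_eq_m1 in Hgt by exact Hv. lra.
Qed.

Variable s : R.
Hypothesis eps_a_small : eps * (2 * a) < s.

Lemma eps_dv_le_of_sin_phase_ge x : -1 < v x -> s <= sin (PI * phase x) -> eps * dv x <= - s / 2.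
Proof.
  intros Hv Hsin. rewrite eps_dv_phase.
  assert (0 < a * eps) by (apply Rmult_lt_0_compat; assumption).
  nra.
Qed.

Section Trapping.
Variables c0 D : R.
Hypothesis Hc0 : 0 < c0.
Hypothesis Derive_psi_ge : forall w, w < 1 -> 1/2 <= psi w -> c0 * (1 - psi w) <= Derive psi w.
Hypothesis HD : 0 < D <= 1/2.
Hypothesis eps_c0_small : eps * 3 < s * c0 * D.

(* Returning to the level 3/2 p - D forces 1/2 <= psi(v) and 1 - psi(v) >= 2D/c, so the
   term c psi'(v) v'/2 of the phase derivative is at most - s c0 D / (2 eps). *)
Lemma dphase_neg_at_lag_level p c : 9 <= p -> p <= c <= p + 4/3 ->
  s <= sin (PI * (3/2 * p - D)) -> phase c = 3/2 * p - D -> dphase c < 0.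
Proof.
  intros Hp Hc Hsin Hphase.
  assert (Hcpsi : c * psi (v c) = 3 * p - 2 * D - 2 * c) by (unfold phase in Hphase; lra).
  assert (Hhalf : 1/2 <= psi (v c)) by nra.
  assert (Hgap : 2 * D <= c * (1 - psi (v c))) by lra.
  assert (Hv1 : v c < 1) by (apply v_lt_1_of_phase_lt; lra).
  assert (Hvm1 : -1 < v c) by (apply v_gt_m1_of_phase_gt; lra).
  assert (HDpsi : 2 * c0 * D <= c * Derive psi (v c)).
  { pose proof (Derive_psi_ge (v c) Hv1 Hhalf). nra. }
  assert (Hdv : eps * dv c <= - s / 2).
  { apply eps_dv_le_of_sin_phase_ge; [exact Hvm1 | now rewrite Hphase]. }
  pose proof (psi_le_1 (v c)).
  assert (eps * dphase c < 0).
  { unfold dphase.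
    replace (eps * (1 + / 2 * psi (v c) + c * (/ 2 * (dv c * Derive psi (v c)))))
      with (eps * (1 + / 2 * psi (v c)) + / 2 * ((eps * dv c) * (c * Derive psi (v c)))) by ring.
    assert (0 < s) by (pose proof (Rmult_lt_0_compat eps (2 * a) Heps ltac:(lra)); lra).
    assert (0 < c0 * D) by now apply Rmult_lt_0_compat.
    assert ((eps * dv c) * (c * Derive psi (v c)) <= - s / 2 * (c * Derive psi (v c)))
      by (apply Rmult_le_compat_r; lra).
    assert (- s / 2 * (c * Derive psi (v c)) <= - s / 2 * (2 * c0 * D))
      by (apply Rmult_le_compat_neg_l; lra).
    assert (eps * (1 + / 2 * psi (v c)) <= eps * (3/2)) by (apply Rmult_le_compat_l; lra).
    lra. }
  nra.
Qed.

Lemma phase_stays_below_lag_level p : 9 <= p -> s <= sin (PI * (3/2 * p - D)) ->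
  phase p <= 3/2 * p - D -> forall y, p <= y <= p + 4/3 -> phase y <= 3/2 * p - D.
Proof.
  intros Hp Hsin Hlag y Hy. apply Rnot_lt_le; intro Habove.
  assert (Hpy : p < y) by (destruct (Req_dec p y) as [<-|]; lra).
  destruct (last_zero_before_positive (fun x => phase x - (3/2 * p - D)) p y Hpy)
    as [c [Hc [Hlevel Hpos]]]; [| lra | lra |].
  { intros x _. apply continuity_pt_minus; [apply phase_continuity_pt | apply continuity_pt_const].
    intros ? ?; reflexivity. }
  assert (0 <= dphase c).
  { apply (is_derive_nonneg_of_right_gt phase c (dphase c) y (phase_is_derive c)); [lra|].
    intros x Hx. specialize (Hpos x Hx). lra. }
  assert (dphase c < 0) by (apply (dphase_neg_at_lag_level p c); lra).
  lra.
Qed.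

Lemma v_lt_1_after_lag x : 9 <= x -> s <= sin (PI * (3/2 * x - D)) ->
  phase x <= 3/2 * x - D -> forall y, x <= y -> v y < 1.
Proof.
  intros Hx Hsin Hlag.
  assert (Hblocks : forall n : nat,
    phase (x + 4/3 * INR n) <= 3/2 * (x + 4/3 * INR n) - D /\
    forall y, x <= y <= x + 4/3 * INR n -> v y < 1).
  { induction n as [|n [IHphase IHv]].
    - simpl. rewrite Rmult_0_r, Rplus_0_r. split; [exact Hlag|].
      intros y Hy. replace y with x by lra. apply v_lt_1_of_phase_lt. lra.
    - set (p := x + 4/3 * INR n) in *.
      replace (x + 4/3 * INR (S n)) with (p + 4/3) by (unfold p; rewrite S_INR; lra).
      pose proof (pos_INR n).
      assert (Hsinp : s <= sin (PI * (3/2 * p - D))).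
      { replace (3/2 * p - D) with ((3/2 * x - D) + 2 * INR n) by (unfold p; lra).
        now rewrite sin_PI_add_even. }
      assert (Hbelow := phase_stays_below_lag_level p ltac:(unfold p; lra) Hsinp IHphase).
      split.
      + specialize (Hbelow (p + 4/3) ltac:(lra)). lra.
      + intros y Hy. destruct (Rle_lt_dec y p); [apply IHv; lra|].
        apply v_lt_1_of_phase_lt. specialize (Hbelow y ltac:(lra)). lra. }
  intros y Hy.
  destruct (INR_archimed (4/3) (y - x)) as [n Hn]; [lra|].
  apply (proj2 (Hblocks n)). lra.
Qed.

End Trapping.

Definition excess x := exp (a * x) * (v x - 1).
Definition energy x := excess x + G a x / eps + exp (a * x).

(* Where v >= 1 the equation is linear with forcing sin (freq x), and energy is its first integral. *)
Lemma energy_is_derive_0 x : 1 <= v x -> is_derive energy x 0.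
Proof.
  intro Hv.
  assert (Hode : eps * dv x = - a * eps * v x - sin (freq * x)).
  { rewrite v_ode, psi_eq_1 by exact Hv.
    replace (PI * x * (1 + / 2 * 1)) with (freq * x) by (unfold freq; field). reflexivity. }
  assert (Hexcess : is_derive excess x (exp (a * x) * (a * (v x - 1) + dv x))).
  { unfold excess. auto_derive.
    - exists (dv x). apply v_is_derive.
    - replace (Derive (fun y => v y) x) with (dv x) by (symmetry; apply is_derive_unique, v_is_derive).
      ring. }
  unfold energy.
  apply (is_derive_ext (fun y => excess y + / eps * G a y + exp (a * y))).
  { intro t. unfold Rdiv. now rewrite (Rmult_comm (/ eps)). }
  replace 0 with (exp (a * x) * (a * (v x - 1) + dv x) + / eps * (exp (a * x) * sin (freq * x)) + a * exp (a * x)).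
  - apply (@is_derive_plus R_AbsRing R_NormedModule); [apply (@is_derive_plus R_AbsRing R_NormedModule)|].
    + exact Hexcess.
    + apply is_derive_scal, G_is_derive.
    + auto_derive; [exact I | ring].
  - apply (Rmult_eq_reg_l eps); [|lra].
    replace (eps * (exp (a * x) * (a * (v x - 1) + dv x) + / eps * (exp (a * x) * sin (freq * x)) + a * exp (a * x)))
      with (exp (a * x) * (a * eps * v x + eps * dv x + sin (freq * x))) by (field; lra).
    rewrite Hode. ring.
Qed.

Lemma energy_const u w : u <= w -> (forall y, u <= y <= w -> 1 <= v y) -> energy w = energy u.
Proof.
  intros Huw Hv.
  destruct (Req_dec u w) as [->|Hne]; [reflexivity|].
  symmetry. apply (eq_is_derive energy u w); [|lra].
  intros t Ht. apply energy_is_derive_0, Hv, Ht.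
Qed.

Section Lagging.
Variable d : R.
Hypothesis Hd : 0 < d <= 1/3.
Hypothesis cos_ge_exp : exp (- a) <= cos (PI * (3/2 * d)).
Hypothesis s_le_sin : s <= sin (PI * (d / 2)).
Hypothesis eps_d_small : eps * 6 < s * d.

(* G nearly peaks at these points: 3/2 * peak k = 2 (k + 1) + 1 - 3/2 d. *)
Definition peak (k : nat) := 2/3 * (2 * INR k + 3 - 3/2 * d).

Section NoLag.
Hypothesis no_lag : forall x, 9 <= x -> s <= sin (PI * (3/2 * x - d / 2)) -> 3/2 * x - d / 2 < phase x.

Lemma v_gt_1_at_peak k : (6 <= k)%nat -> 1 < v (peak k).
Proof.
  intro Hk. assert (HkR : 6 <= INR k) by (apply (le_INR 6) in Hk; simpl in Hk; lra).
  set (x := peak k). set (x' := x + 2/3 * d).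
  assert (Hfall : forall y, x <= y <= x' -> -1 < v y /\ eps * dv y <= - s / 2).
  { intros y Hy.
    assert (Hy9 : 9 <= y) by (unfold x', x, peak in *; lra).
    assert (Hwin : 2 * INR (S k) + 1 - 2 * d <= 3/2 * y - d / 2 /\ 3/2 * y <= 2 * INR (S k) + 1 - d / 2)
      by (rewrite S_INR; unfold x', x, peak in *; lra).
    assert (Hlag : 3/2 * y - d / 2 < phase y).
    { apply no_lag; [exact Hy9|].
      apply (Rle_trans _ _ _ s_le_sin), (sin_PI_ge_on_half_period (S k)); lra. }
    assert (Hvy : -1 < v y) by (apply v_gt_m1_of_phase_gt; lra).
    split; [exact Hvy|].
    apply eps_dv_le_of_sin_phase_ge; [exact Hvy|].
    pose proof (phase_le y ltac:(lra)).
    apply (Rle_trans _ _ _ s_le_sin), (sin_PI_ge_on_half_period (S k)); lra. }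
  destruct (MVT_gen v x x' dv) as [c [Hc Heq]]; rewrite ?Rmin_left, ?Rmax_right in * by (unfold x'; lra).
  - intros; apply v_is_derive.
  - intros; apply v_continuity_pt.
  - destruct (Hfall c Hc) as [_ Hdc]. destruct (Hfall x' ltac:(unfold x'; lra)) as [Hvx' _].
    assert (eps * (v x' - v x) <= - s / 2 * (2/3 * d)).
    { rewrite Heq. replace (x' - x) with (2/3 * d) by (unfold x'; ring).
      replace (eps * (dv c * (2/3 * d))) with (eps * dv c * (2/3 * d)) by ring.
      apply Rmult_le_compat_r; lra. }
    assert (v x' - v x < -2) by (apply (Rmult_lt_reg_l eps); lra).
    lra.
Qed.

Lemma v_ge_1_before_peak k : (6 <= k)%nat -> forall y, peak k <= y <= peak (S k) -> 1 <= v y.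
Proof.
  intros Hk y Hy. apply Rnot_lt_le; intro Hvy.
  set (x := peak (S k)) in *.
  assert (Hvx : 1 < v x) by (apply v_gt_1_at_peak; lia).
  assert (Hyx : y < x) by (destruct (Req_dec y x) as [->|]; lra).
  destruct (last_zero_before_positive (fun t => v t - 1) y x Hyx) as [c [Hc [Hvc Hpos]]]; [| lra | lra |].
  { intros t _. apply continuity_pt_minus; [apply v_continuity_pt | apply continuity_pt_const].
    intros ? ?; reflexivity. }
  assert (Hconst : energy x = energy c).
  { apply energy_const; [lra|]. intros t Ht.
    destruct (Req_dec t c) as [->|]; [lra|]. specialize (Hpos t ltac:(lra)). lra. }
  assert (HG : G a c <= G a x).
  { apply (G_le_at_peak a Ha (S k) (3/2 * d)); [lra | exact cos_ge_exp | | ].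
    - unfold x, peak. rewrite !S_INR. lra.
    - unfold x, peak in *. rewrite S_INR in *. lra. }
  assert (exp (a * c) < exp (a * x)) by (apply exp_increasing; nra).
  assert (G a c / eps <= G a x / eps) by (apply Rmult_le_compat_r; [apply Rlt_le, Rinv_0_lt_compat|]; lra).
  assert (Hexcess : 0 < excess x) by (apply Rmult_lt_0_compat; [apply exp_pos | lra]).
  unfold energy, excess in Hconst, Hexcess. replace (v c - 1) with 0 in Hconst by lra.
  lra.
Qed.

Lemma excess_decreases k : (6 <= k)%nat ->
  excess (peak (S k)) <= excess (peak k) - period_gain a (3/2 * d) / eps.
Proof.
  intro Hk. assert (HkR : 6 <= INR k) by (apply (le_INR 6) in Hk; simpl in Hk; lra).
  assert (Hperiod : peak k = peak (S k) - 4/3) by (unfold peak; rewrite S_INR; lra).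
  assert (Hconst : energy (peak (S k)) = energy (peak k))
    by (apply energy_const; [lra | apply v_ge_1_before_peak, Hk]).
  assert (Hgain : period_gain a (3/2 * d) <= G a (peak (S k)) - G a (peak k)).
  { rewrite Hperiod. apply (G_gain_over_period a Ha (S (S k))); [lra | unfold peak; rewrite S_INR; lra |].
    unfold peak. rewrite !S_INR. lra. }
  assert (exp (a * peak k) <= exp (a * peak (S k))) by (apply exp_le_exp; nra).
  assert (period_gain a (3/2 * d) / eps <= (G a (peak (S k)) - G a (peak k)) / eps)
    by (apply Rmult_le_compat_r; [apply Rlt_le, Rinv_0_lt_compat|]; lra).
  unfold energy in Hconst. unfold Rdiv in *. rewrite Rmult_minus_distr_r in *.
  lra.
Qed.

Lemma no_lag_absurd : False.
Proof.
  set (gain := period_gain a (3/2 * d) / eps).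
  assert (Hgain : 0 < gain).
  { apply Rdiv_lt_0_compat; [apply period_gain_pos|]; pose proof (exp_pos (- a)); lra. }
  assert (Hdrop : forall n, excess (peak (6 + n)) <= excess (peak 6) - INR n * gain).
  { induction n as [|n IH]; [simpl; lra|].
    replace (6 + S n)%nat with (S (6 + n)) by lia.
    pose proof (excess_decreases (6 + n) ltac:(lia)). rewrite S_INR. unfold gain in *. lra. }
  destruct (INR_archimed gain (excess (peak 6)) Hgain) as [n Hn].
  assert (0 < excess (peak (6 + n))).
  { apply Rmult_lt_0_compat; [apply exp_pos|]. pose proof (v_gt_1_at_peak (6 + n) ltac:(lia)). lra. }
  pose proof (Hdrop n). lra.
Qed.

End NoLag.

Lemma phase_lags_somewhere : exists x, 9 <= x /\
  s <= sin (PI * (3/2 * x - d / 2)) /\ phase x <= 3/2 * x - d / 2.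
Proof.
  apply NNPP. intro Hnone. apply no_lag_absurd.
  intros x Hx Hsin. apply Rnot_le_lt. intro Hlag. apply Hnone. now exists x.
Qed.

End Lagging.
End Solution.
End Transition.

Theorem proposition6 (psi : R -> R) (a : R) :
  transition_function psi -> 0 < a ->
  exists eps0, 0 < eps0 /\
    forall eps, 0 < eps < eps0 ->
    forall v : R -> R, is_solution psi a eps v ->
    exists xT, 0 <= xT /\ forall x, xT <= x -> V0 (v x) \/ Vminus (v x).
Proof.
  intros Hpsi Ha.
  destruct (Derive_psi_ge_gap psi Hpsi) as [c0 [Hc0 Hgap]].
  destruct (exists_cos_PI_ge (exp (- a))) as [d [Hd Hcos]].
  { rewrite <- exp_0. apply exp_increasing. lra. }
  set (s := sin (PI * (d / 2))).
  assert (Hs : 0 < s) by (apply sin_gt_0; pose proof PI_RGT_0; nra).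
  exists (Rmin (s / (2 * a)) (Rmin (s * d / 6) (s * c0 * d / 6))).
  split.
  { repeat apply Rmin_pos; repeat apply Rdiv_lt_0_compat; try apply Rmult_lt_0_compat; nra. }
  intros eps [Heps Hsmall] v [dv Hsol].
  apply Rmin_Rgt_l in Hsmall as [Hsmall_a Hsmall]. apply Rmin_Rgt_l in Hsmall as [Hsmall_d Hsmall_c0].
  apply (Rlt_div_r eps s (2 * a)) in Hsmall_a; [|lra].
  apply (Rlt_div_r eps (s * d) 6) in Hsmall_d; [|lra].
  apply (Rlt_div_r eps (s * c0 * d) 6) in Hsmall_c0; [|lra].
  pose proof (fun x => proj1 (Hsol x)) as Hder. pose proof (fun x => proj2 (Hsol x)) as Hode.
  destruct (phase_lags_somewhere psi Hpsi a eps v dv Ha Heps Hder Hode s Hsmall_a d Hd Hcos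
              (Rle_refl s) Hsmall_d) as [x [Hx [Hsin Hlag]]].
  exists x. split; [lra|]. intros y Hy.
  destruct (Rle_lt_dec (v y) (-1)) as [Hm1 | Hm1]; [now right | left].
  apply Rabs_def1; [|lra].
  apply (v_lt_1_after_lag psi Hpsi a eps v dv Ha Heps Hder Hode s Hsmall_a c0 (d / 2) Hc0 Hgap)
    with x; lra.
Qed.
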